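(* Let $\mathcal{C}$ be a category, $D \colon \mathcal{I} \to \mathcal{C}$ and $E \colon \mathcal{J} \to \mathcal{C}$ diagrams, $H \colon \mathcal{I}' \to \mathcal{I}$ a final functor and $K \colon \mathcal{J}' \to \mathcal{J}$ an initial functor. Then for any cocone $p \colon D \to \Delta V$ and any cone $q \colon \Delta W \to E$, we have $p \perp q$ if and only if $pH \perp qK$.
   Context: A cocone under $D$ with vertex $V$ is a natural transformation $p \colon D \to \Delta V$; a cone over $E$ with vertex $W$ is a natural transformation $q \colon \Delta W \to E$; $pH \colon DH \to \Delta V$ and $qK \colon \Delta W \to EK$ denote whiskerings. A cylinder $D \rightsquigarrow E$ is a family $r_{ij} \colon Di \to Ej$ natural in $(i,j)$; $q\cdot h$ for a cocone $h\colon D\to\Delta W$ and cone $q\colon \Delta W\to E$ is the cylinder with components $q_jh_i$. Orthogonality $p \perp q$ means: for every cocone $h \colon D \to \Delta W$ and cone $k \colon \Delta V \to E$ with $q \cdot h = k \cdot p$ as cylinders, there is a unique $j \colon V \to W$ with $j \cdot p = h$ and $q \cdot j = k$. A functor $K \colon \mathcal{J}' \to \mathcal{J}$ is initial if each comma category $K/j$ is connected (nonempty and connected); $H \colon \mathcal{I}' \to \mathcal{I}$ is final if each comma category $i/H$ is connected. *)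

From Stdlib Require Import Relations.

Set Implicit Arguments.
Unset Strict Implicit.

(** Categories (hom-types with Leibniz equality of morphisms).
    [comp g f] is g ∘ f : a -> c for f : a -> b, g : b -> c. *)
Record Category := {
  Ob :> Type;
  Hom : Ob -> Ob -> Type;
  idm : forall a, Hom a a;
  comp : forall a b c, Hom b c -> Hom a b -> Hom a c;
  comp_id_l : forall a b (f : Hom a b), comp (idm b) f = f;
  comp_id_r : forall a b (f : Hom a b), comp f (idm a) = f;
  comp_assoc : forall a b c d (f : Hom a b) (g : Hom b c) (h : Hom c d),
      comp h (comp g f) = comp (comp h g) f
}.

Arguments Hom {C} : rename.
Arguments idm {C} : rename.
Arguments comp {C a b c} : rename.

Record Functor (A B : Category) := {
  fobj :> A -> B;
  fmap : forall a a' : A, Hom a a' -> Hom (fobj a) (fobj a');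
  fmap_id : forall a, fmap (idm a) = idm (fobj a);
  fmap_comp : forall a b c (f : Hom a b) (g : Hom b c),
      fmap (comp g f) = comp (fmap g) (fmap f)
}.

Arguments fmap {A B} F {a a'} : rename.

Definition connected (O : Type) (M : O -> O -> Type) : Prop :=
  inhabited O /\
  forall x y : O, clos_refl_sym_trans O (fun a b => inhabited (M a b)) x y.

(** Comma category i/H for H : I' -> I and i : I:
    objects (i', f : i -> H i'), morphisms (i'1,f1) -> (i'2,f2) are
    u : i'1 -> i'2 with H u ∘ f1 = f2. *)
Definition under_ob (I' I : Category) (H : Functor I' I) (i : I) : Type :=
  { i' : I' & Hom i (H i') }.

Definition under_hom (I' I : Category) (H : Functor I' I) (i : I)
  (x y : under_ob H i) : Type :=
  { u : Hom (projT1 x) (projT1 y) | comp (fmap H u) (projT2 x) = projT2 y }.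

(** Comma category K/j for K : J' -> J and j : J:
    objects (j', f : K j' -> j), morphisms (j'1,f1) -> (j'2,f2) are
    u : j'1 -> j'2 with f2 ∘ K u = f1. *)
Definition over_ob (J' J : Category) (K : Functor J' J) (j : J) : Type :=
  { j' : J' & Hom (K j') j }.

Definition over_hom (J' J : Category) (K : Functor J' J) (j : J)
  (x y : over_ob K j) : Type :=
  { u : Hom (projT1 x) (projT1 y) | comp (projT2 y) (fmap K u) = projT2 x }.

Definition final (I' I : Category) (H : Functor I' I) : Prop :=
  forall i : I, connected (@under_hom I' I H i).

Definition initial (J' J : Category) (K : Functor J' J) : Prop :=
  forall j : J, connected (@over_hom J' J K j).

Record cocone (I C : Category) (D : Functor I C) (V : C) := {
  cocone_at :> forall i : I, Hom (D i) V;
  cocone_nat : forall (i i' : I) (f : Hom i i'),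
      comp (cocone_at i') (fmap D f) = cocone_at i
}.

Record cone (J C : Category) (E : Functor J C) (W : C) := {
  cone_at :> forall j : J, Hom W (E j);
  cone_nat : forall (j j' : J) (f : Hom j j'),
      comp (fmap E f) (cone_at j) = cone_at j'
}.

Definition orthogonal (I J C : Category) (D : Functor I C) (E : Functor J C)
  (V W : C) (p : cocone D V) (q : cone E W) : Prop :=
  forall (h : cocone D W) (k : cone E V),
    (forall (i : I) (j : J), comp (q j) (h i) = comp (k j) (p i)) ->
    exists t : Hom V W,
      ((forall i : I, comp t (p i) = h i) /\ (forall j : J, comp (q j) t = k j)) /\
      (forall t' : Hom V W,
         (forall i : I, comp t' (p i) = h i) /\ (forall j : J, comp (q j) t' = k j) ->
         t' = t).

Definition Fcomp (A B C : Category) (F : Functor B C) (G : Functor A B) :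
  Functor A C.
Proof.
  refine {| fobj := fun a => F (G a);
            fmap := fun a a' f => fmap F (fmap G f) |}.
  - intro a; rewrite (fmap_id G), (fmap_id F); reflexivity.
  - intros a b c f g; rewrite (fmap_comp G), (fmap_comp F); reflexivity.
Defined.

Definition whisker_cocone (I' I C : Category) (D : Functor I C) (V : C)
  (p : cocone D V) (H : Functor I' I) : cocone (Fcomp D H) V.
Proof.
  refine (@Build_cocone I' C (Fcomp D H) V (fun i' => p (H i')) _).
  intros i i' f; simpl; apply (cocone_nat p).
Defined.

Definition whisker_cone (J' J C : Category) (E : Functor J C) (W : C)
  (q : cone E W) (K : Functor J' J) : cone (Fcomp E K) W.
Proof.
  refine (@Build_cone J' C (Fcomp E K) W (fun j' => q (K j')) _).
  intros j j' f; simpl; apply (cone_nat q).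
Defined.

(* A final H has every i/H nonempty, so a cocone under D is determined by its
   restriction along H; connectedness of i/H makes every cocone under DH extend
   to one under D (set h_i := h'_{i'} ∘ D f for any f : i -> H i', which does
   not depend on the choice of (i', f)).  Dually for cones and initial K.
   Hence the test pairs (h, k), the cylinder condition and the factorizations
   of p ⊥ q correspond exactly to those of pH ⊥ qK. *)
From Stdlib Require Import ClassicalEpsilon.
Set Implicit Arguments.

Lemma connected_const (O X : Type) (M : O -> O -> Type) (F : O -> X) :
  connected M -> (forall a b, M a b -> F a = F b) -> forall x y, F x = F y.
Proof.
  intros [_ Hzz] HF x y.
  induction (Hzz x y) as [a b [m]| | |]; eauto; congruence.
Qed.

Definition cocone_post (I C : Category) (D : Functor I C) (X Y : C)
  (t : Hom X Y) (h : cocone D X) : cocone D Y.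
Proof.
  refine (@Build_cocone I C D Y (fun i => comp t (h i)) _).
  intros i i' f; rewrite <- comp_assoc, (cocone_nat h); reflexivity.
Defined.
Arguments cocone_post {I C D X Y} t h.

Definition cone_pre (J C : Category) (E : Functor J C) (X Y : C)
  (k : cone E Y) (t : Hom X Y) : cone E X.
Proof.
  refine (@Build_cone J C E X (fun j => comp (k j) t) _).
  intros j j' f; rewrite comp_assoc, (cone_nat k); reflexivity.
Defined.
Arguments cone_pre {J C E X Y} k t.

Section Final.
Variables (I' I C : Category) (D : Functor I C) (H : Functor I' I).
Hypothesis HH : final H.

Lemma cocone_eq_on_final (X : C) (a b : cocone D X) :
  (forall i', a (H i') = b (H i')) -> forall i, a i = b i.
Proof.
  intros Hab i; destruct (proj1 (HH i)) as [[i' f]].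
  rewrite <- (cocone_nat a f), <- (cocone_nat b f), Hab; reflexivity.
Qed.

Variables (W : C) (h' : cocone (Fcomp D H) W).

Definition under_value (i : I) (x : under_ob H i) : Hom (D i) W :=
  comp (h' (projT1 x) : Hom (D (H (projT1 x))) W) (fmap D (projT2 x)).

Lemma under_value_const (i : I) (x y : under_ob H i) : under_value x = under_value y.
Proof.
  apply (connected_const _ (HH i)).
  intros [a fa] [b fb] [u Hu]; unfold under_value; simpl in *; subst fb.
  rewrite (fmap_comp D), comp_assoc; f_equal; symmetry; exact (cocone_nat h' u).
Qed.

Definition cocone_extend_at (i : I) : Hom (D i) W :=
  under_value (epsilon (proj1 (HH i)) (fun _ => True)).

Lemma cocone_extend_nat (i i2 : I) (f : Hom i i2) :
  comp (cocone_extend_at i2) (fmap D f) = cocone_extend_at i.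
Proof.
  unfold cocone_extend_at; set (y := epsilon (proj1 (HH i2)) (fun _ => True)).
  rewrite <- (under_value_const (existT _ (projT1 y) (comp (projT2 y) f))).
  unfold under_value; simpl; rewrite (fmap_comp D), comp_assoc; reflexivity.
Qed.

Definition cocone_extend : cocone D W := Build_cocone cocone_extend_nat.

Lemma cocone_extend_whisker (i' : I') : cocone_extend (H i') = h' i'.
Proof.
  simpl; unfold cocone_extend_at.
  rewrite (under_value_const _ (existT _ i' (idm (H i')))).
  unfold under_value; simpl; rewrite (fmap_id D), comp_id_r; reflexivity.
Qed.
End Final.

Section Initial.
Variables (J' J C : Category) (E : Functor J C) (K : Functor J' J).
Hypothesis HK : initial K.

Lemma cone_eq_on_initial (X : C) (a b : cone E X) :
  (forall j', a (K j') = b (K j')) -> forall j, a j = b j.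
Proof.
  intros Hab j; destruct (proj1 (HK j)) as [[j' g]].
  rewrite <- (cone_nat a g), <- (cone_nat b g), Hab; reflexivity.
Qed.

Variables (V : C) (k' : cone (Fcomp E K) V).

Definition over_value (j : J) (x : over_ob K j) : Hom V (E j) :=
  comp (fmap E (projT2 x)) (k' (projT1 x) : Hom V (E (K (projT1 x)))).

Lemma over_value_const (j : J) (x y : over_ob K j) : over_value x = over_value y.
Proof.
  apply (connected_const _ (HK j)).
  intros [a fa] [b fb] [u Hu]; unfold over_value; simpl in *; subst fa.
  rewrite (fmap_comp E), <- comp_assoc; f_equal; exact (cone_nat k' u).
Qed.

Definition cone_extend_at (j : J) : Hom V (E j) :=
  over_value (epsilon (proj1 (HK j)) (fun _ => True)).

Lemma cone_extend_nat (j j2 : J) (f : Hom j j2) :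
  comp (fmap E f) (cone_extend_at j) = cone_extend_at j2.
Proof.
  unfold cone_extend_at; set (y := epsilon (proj1 (HK j)) (fun _ => True)).
  rewrite <- (over_value_const (existT _ (projT1 y) (comp f (projT2 y)))).
  unfold over_value; simpl; rewrite (fmap_comp E), comp_assoc; reflexivity.
Qed.

Definition cone_extend : cone E V := Build_cone cone_extend_nat.

Lemma cone_extend_whisker (j' : J') : cone_extend (K j') = k' j'.
Proof.
  simpl; unfold cone_extend_at.
  rewrite (over_value_const _ (existT _ j' (idm (K j')))).
  unfold over_value; simpl; rewrite (fmap_id E), comp_id_l; reflexivity.
Qed.
End Initial.

Section Orthogonality.
Variables (C I J I' J' : Category) (D : Functor I C) (E : Functor J C).
Variables (H : Functor I' I) (K : Functor J' J).
Hypotheses (HH : final H) (HK : initial K).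
Variables (V W : C) (p : cocone D V) (q : cone E W).

Definition factors (I0 J0 : Category) (D0 : Functor I0 C) (E0 : Functor J0 C)
  (p0 : cocone D0 V) (q0 : cone E0 W) (h : cocone D0 W) (k : cone E0 V)
  (t : Hom V W) : Prop :=
  (forall i, comp t (p0 i) = h i) /\ (forall j, comp (q0 j) t = k j).

Lemma factors_whisker (h : cocone D W) (k : cone E V) (t : Hom V W) :
  factors p q h k t <->
  factors (whisker_cocone p H) (whisker_cone q K)
          (whisker_cocone h H) (whisker_cone k K) t.
Proof.
  split; intros [Hp Hq]; split; intros; simpl; auto.
  - exact (cocone_eq_on_final HH (cocone_post t p) h Hp i).
  - exact (cone_eq_on_initial HK (cone_pre q t) k Hq j).
Qed.

Lemma cylinder_whisker (h : cocone D W) (k : cone E V) :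
  (forall i' j', comp (q (K j')) (h (H i')) = comp (k (K j')) (p (H i'))) ->
  forall i j, comp (q j) (h i) = comp (k j) (p i).
Proof.
  intros Hc i.
  apply (cone_eq_on_initial HK (cone_pre q (h i)) (cone_pre k (p i))); intro j'.
  exact (cocone_eq_on_final HH (cocone_post (q (K j')) h)
           (cocone_post (k (K j')) p) (fun i' => Hc i' j') i).
Qed.

Lemma orthogonal_whisker :
  orthogonal p q -> orthogonal (whisker_cocone p H) (whisker_cone q K).
Proof.
  intros Horth h' k' Hc.
  pose (h := cocone_extend HH h'); pose (k := cone_extend HK k').
  assert (Hwhisker : forall t,
    factors (whisker_cocone p H) (whisker_cone q K) h' k' t <-> factors p q h k t).
  { intro t; rewrite factors_whisker; unfold factors; simpl.
    unfold h, k; setoid_rewrite cocone_extend_whisker;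
      setoid_rewrite cone_extend_whisker; reflexivity. }
  destruct (Horth h k) as [t [Ht Huniq]].
  { apply cylinder_whisker; intros i' j'; unfold h, k.
    rewrite cocone_extend_whisker, cone_extend_whisker; exact (Hc i' j'). }
  exists t; split; [apply Hwhisker; exact Ht|].
  intros t' Ht'; apply Huniq, Hwhisker, Ht'.
Qed.

Lemma orthogonal_of_whisker :
  orthogonal (whisker_cocone p H) (whisker_cone q K) -> orthogonal p q.
Proof.
  intros Horth h k Hc.
  destruct (Horth (whisker_cocone h H) (whisker_cone k K)) as [t [Ht Huniq]].
  { intros i' j'; apply Hc. }
  exists t; split; [apply factors_whisker, Ht|].
  intros t' Ht'; apply Huniq, factors_whisker, Ht'.
Qed.
End Orthogonality.

Theorem lemma2p7 (C I J I' J' : Category)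
  (D : Functor I C) (E : Functor J C)
  (H : Functor I' I) (K : Functor J' J)
  (HH : final H) (HK : initial K)
  (V W : C) (p : cocone D V) (q : cone E W) :
  orthogonal p q <-> orthogonal (whisker_cocone p H) (whisker_cone q K).
Proof.
  split; [apply orthogonal_whisker | apply orthogonal_of_whisker]; assumption.
Qed.
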